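(* Let $\mathcal{SB}=\langle\mathcal{L},A,\to,\text{supp}\rangle$ be a saturated SBAF. Then every preferred extension $E\subseteq A$ of $\langle A,\to\rangle$ is a confident weakly coherent argument extension.
   Context: A language is a triple $\mathcal{L}=\langle L,\overline{\cdot},n\rangle$: $L$ is a nonempty set of sentences; $\overline{\cdot}$ assigns to each $s\in L$ a set $\overline{s}\subseteq L$ of sentences incompatible with $s$, and is symmetric; $n$ is a partial naming function assigning to an argument $a$ a sentence $n(a)\in L$ (if undefined, put $\overline{n(a)}:=\emptyset$), with $\overline{n(\langle\{t\},t\rangle)}=\emptyset$. An argument is a pair $a=\langle Prem(a),Conc(a)\rangle$ with $Prem(a)$ a nonempty finite subset of $L$ and $Conc(a)\in L$; $Sent(a):=Prem(a)\cup\{Conc(a)\}$, $Sent(E):=\bigcup_{a\in E}Sent(a)$. The minimal argument for $s$ is $\langle\{s\},s\rangle$. A set $E$ supports $a$ if $Prem(a)\subseteq Sent(E)$; $E$ contains undercutting information for $a$ if $\overline{n(a)}\cap Sent(E)\neq\emptyset$. Argument $a$ attacks $b$ ($a\to b$) if $Conc(a)\in\overline{s}$ for some $s\in Sent(b)$ or $Conc(a)\in\overline{n(b)}$. An SBAF is $\langle\mathcal{L},A,\to,\text{supp}\rangle$ with $A$ a finite set of arguments. For $E\subseteq A$: $E$ defends $a\in A$ if for every $b\in A$ with $b\to a$ some element of $E$ attacks $b$; $E$ is conflict-free if no $a,b\in E$ with $a\to b$; admissible if conflict-free and defends all its elements; preferred if $\subseteq$-maximal among admissible sets. $E$ is weakly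 coherent if it is admissible and every $a\in A$ supported by $E$, for which $E$ contains no undercutting information and which $E$ defends, belongs to $E$. $S$ is compatible if no $s,t\in S$ with $s\in\overline t$. $Arg_s(S):=\{a\in A\mid Prem(a)\subseteq S\text{ and }\overline{n(a)}\cap S=\emptyset\}$; $R^S(E):=\{a\in A\mid a\in Arg_s(S)\text{ and }E\text{ defends }a\}$. For compatible $S$, $Init(S)$ is the largest admissible subset of $\{a\in A\mid Sent(a)\subseteq S\text{ and }\overline{n(a)}\cap S=\emptyset\}$, and $Arg_w(S)$ is the $\subseteq$-least set $E$ with $Init(S)\subseteq E$ and $R^S(E)=E$. A weakly adequate language extension is a compatible $S\subseteq Sent(A)$ with $Sent(a)\subseteq S$ for all $a\in Arg_w(S)$; it is confident if it is $\subseteq$-maximal among weakly adequate language extensions. An argument extension $E$ is confident weakly coherent if it is weakly coherent and $E=Arg_w(S)$ for some confident weakly adequate language extension $S$. The SBAF is saturated if (i) for every $s\in Sent(A)$ for which some $t\in Sent(A)\cap\overline{s}$ exists, $A$ contains the minimal argument for $s$ or the minimal argument for $t$, and (ii) for every $u\in Sent(A)$ with $u\in\overline{n(a)}$ for some $a\in A$, $A$ contains the minimal argument for $u$. *)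

From HB Require Import structures.
From mathcomp Require Import all_boot finmap.
Set Implicit Arguments. Unset Strict Implicit. Unset Printing Implicit Defensive.
Local Open Scope fset_scope.

Section SBAF.
Variable S : choiceType.

Definition Arg : Type := ({fset S} * S)%type.
Definition Prem (a : Arg) : {fset S} := a.1.
Definition Conc (a : Arg) : S := a.2.
Definition minarg (s : S) : Arg := ([fset s], s).

Definition Sent (a : Arg) (s : S) : Prop := s \in Prem a \/ s = Conc a.

Variable inc : S -> S -> Prop.  (* inc s t  <->  t \in overline s *)
Variable n : Arg -> option S.
Variable A : {fset Arg}.

(* u \in overline (n a), empty when n a undefined *)
Definition und (a : Arg) (u : S) : Prop :=
  match n a with Some x => inc x u | None => False end.

Definition SentE (E : Arg -> Prop) (s : S) : Prop := exists a, E a /\ Sent a s.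
Definition SentA (s : S) : Prop := exists2 a, a \in A & Sent a s.

Definition attacks (a b : Arg) : Prop :=
  (exists s, Sent b s /\ inc s (Conc a)) \/ und b (Conc a).

Definition subA (E : Arg -> Prop) : Prop := forall a, E a -> a \in A.
Definition incl (E F : Arg -> Prop) : Prop := forall a, E a -> F a.

Definition defends (E : Arg -> Prop) (a : Arg) : Prop :=
  forall b, b \in A -> attacks b a -> exists c, E c /\ attacks c b.
Definition conflict_free (E : Arg -> Prop) : Prop :=
  forall a b, E a -> E b -> ~ attacks a b.
Definition admissible (E : Arg -> Prop) : Prop :=
  subA E /\ conflict_free E /\ (forall a, E a -> defends E a).
Definition preferred (E : Arg -> Prop) : Prop :=
  admissible E /\ (forall E', admissible E' -> incl E E' -> incl E' E).

Definition supports (E : Arg -> Prop) (a : Arg) : Prop :=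
  forall s, s \in Prem a -> SentE E s.
Definition undercut_info (E : Arg -> Prop) (a : Arg) : Prop :=
  exists u, und a u /\ SentE E u.

Definition weakly_coherent (E : Arg -> Prop) : Prop :=
  admissible E /\
  (forall a, a \in A -> supports E a -> ~ undercut_info E a -> defends E a -> E a).

Definition compatible (X : S -> Prop) : Prop :=
  forall s t, X s -> X t -> ~ inc t s.

Definition Arg_s (X : S -> Prop) (a : Arg) : Prop :=
  a \in A /\ (forall s, s \in Prem a -> X s) /\ (forall u, und a u -> ~ X u).
Definition R (X : S -> Prop) (E : Arg -> Prop) (a : Arg) : Prop :=
  Arg_s X a /\ defends E a.

Definition InitCand (X : S -> Prop) (a : Arg) : Prop :=
  a \in A /\ (forall s, Sent a s -> X s) /\ (forall u, und a u -> ~ X u).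
(* Init(X): largest admissible subset of InitCand X, i.e. the union of all of them *)
Definition Init (X : S -> Prop) (a : Arg) : Prop :=
  exists E, admissible E /\ incl E (InitCand X) /\ E a.
(* Arg_w(X): least E with Init X ⊆ E and R^X(E) = E, i.e. intersection of all such *)
Definition Arg_w (X : S -> Prop) (a : Arg) : Prop :=
  forall E, incl (Init X) E -> (forall b, R X E b <-> E b) -> E a.

Definition weakly_adequate (X : S -> Prop) : Prop :=
  compatible X /\ (forall s, X s -> SentA s) /\
  (forall a, Arg_w X a -> forall s, Sent a s -> X s).
Definition confident (X : S -> Prop) : Prop :=
  weakly_adequate X /\
  (forall Y, weakly_adequate Y -> (forall s, X s -> Y s) -> forall s, Y s -> X s).

Definition confident_weakly_coherent (E : Arg -> Prop) : Prop :=
  weakly_coherent E /\ exists X, confident X /\ forall a, E a <-> Arg_w X a.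

Definition saturated : Prop :=
  (forall s t, SentA s -> SentA t -> inc s t -> minarg s \in A \/ minarg t \in A) /\
  (forall u a, SentA u -> a \in A -> und a u -> minarg u \in A).

End SBAF.

From HB Require Import structures.
From mathcomp Require Import all_boot finmap boolp.
Set Implicit Arguments.
Unset Strict Implicit.
Unset Printing Implicit Defensive.
Local Open Scope fset_scope.

(* A preferred extension E is maximal admissible, so it contains every argument
   it defends; hence it is weakly coherent.  Saturation supplies minimal
   arguments for both sides of every conflict and for every undercutter, and
   since minimal arguments cannot be undercut, E can only answer an attack by a
   minimal argument <u> with an argument whose conclusion conflicts with u.
   This makes Sent(E) compatible and forces E inside the candidate set of
   Init(X) for every compatible X containing Sent(E), so that Init(X) = E and
   then Arg_w(X) = E.  In particular Sent(E) is weakly adequate, and, the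
   sentences of A being finitely many, it extends to a confident weakly
   adequate X, for which again Arg_w(X) = E. *)

Definition missing (T : eqType) (L : seq T) (Y : T -> Prop) : nat :=
  count (fun s => ~~ `[< Y s >]) L.

Lemma missing_lt (T : eqType) (L : seq T) (Y W : T -> Prop) s :
  (forall x, Y x -> W x) -> s \in L -> W s -> ~ Y s ->
  missing L W < missing L Y.
Proof.
move=> YW + Ws nYs; elim: L => //= x L IH.
have le_x : ~~ `[< W x >] <= ~~ `[< Y x >].
  by case: (asboolP (Y x)) => [/YW/asboolP ->|]; rewrite ?leq_b1.
rewrite inE => /orP[/eqP <-|sL]; last by rewrite -addnS; apply: leq_add (IH sL).
rewrite (asboolT Ws) (asboolF nYs) add0n add1n ltnS.
by apply: sub_count => y /=; apply: contra => /asboolP/YW/asboolP.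
Qed.

Lemma exists_maximal_above (T : eqType) (L : seq T)
    (P : (T -> Prop) -> Prop) (Y : T -> Prop) :
  (forall W s, P W -> W s -> s \in L) -> P Y ->
  exists Z, [/\ P Z, (forall W, P W -> (forall s, Z s -> W s) -> forall s, W s -> Z s)
              & forall s, Y s -> Z s].
Proof.
move=> PL PY; have [k lt_Yk] : exists k, missing L Y < k by exists (missing L Y).+1.
elim: k Y lt_Yk PY => // k IH Y lt_Yk PY.
have [maxY|] := pselect (forall W, P W -> (forall s, Y s -> W s) -> forall s, W s -> Y s).
  by exists Y.
move=> /existsNP[W /not_implyP[PW /not_implyP[YW /existsNP[s /not_implyP[Ws nYs]]]]].
have lt_WY := missing_lt YW (PL W s PW Ws) Ws nYs.
have [Z [PZ maxZ WZ]] := IH W (leq_trans lt_WY lt_Yk) PW.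
by exists Z; split=> // x /YW /WZ.
Qed.

Section PreferredExtensions.
Variables (S : choiceType) (inc : S -> S -> Prop) (n : Arg S -> option S).
Variable A : {fset Arg S}.

Local Notation attacks := (attacks inc n).
Local Notation defends := (defends inc n A).
Local Notation conflict_free := (conflict_free inc n).
Local Notation admissible := (admissible inc n A).
Local Notation preferred := (preferred inc n A).
Local Notation compatible := (compatible inc).
Local Notation InitCand := (InitCand inc n A).
Local Notation Init := (Init inc n A).
Local Notation Arg_w := (Arg_w inc n A).
Local Notation weakly_adequate := (weakly_adequate inc n A).

Lemma defends_sub (E F : Arg S -> Prop) a :
  incl E F -> defends E a -> defends F a.
Proof. by move=> EF dEa b bA /(dEa b bA)[c [/EF Fc cb]]; exists c. Qed.

Lemma admissible_not_attacks_defended (E : Arg S -> Prop) b c :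
  admissible E -> defends E b -> E c -> ~ attacks c b.
Proof.
move=> [EA [cfE _]] dEb Ec cb.
by have [d [Ed dc]] := dEb c (EA c Ec) cb; exact: cfE Ed Ec dc.
Qed.

Lemma preferred_maximal (E F : Arg S -> Prop) :
  preferred E -> subA A F -> conflict_free (fun x => E x \/ F x) ->
  (forall a, F a -> defends (fun x => E x \/ F x) a) -> incl F E.
Proof.
move=> [[EA [_ dE]] maxE] FA cfEF dF a Fa.
have admEF : admissible (fun x => E x \/ F x).
  split; first by move=> x [/EA|/FA].
  split=> // x [Ex|/dF //].
  by apply: defends_sub (dE x Ex) => y; left.
exact: (maxE _ admEF (fun x Ex => or_introl Ex) a (or_intror Fa)).
Qed.

Lemma preferred_defended (E : Arg S -> Prop) b :
  preferred E -> b \in A -> defends E b -> E b.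
Proof.
move=> prefE bA dEb; have [admE _] := prefE; have [EA [cfE dE]] := admE.
have not_attacks_b c : E c -> ~ attacks c b := admissible_not_attacks_defended admE dEb.
apply: (preferred_maximal (F := eq^~ b)) => //; first by move=> x ->.
  move=> x y [Ex|->] [Ey|->] //.
  - exact: cfE.
  - exact: not_attacks_b.
  - by move=> /(dE y Ey b bA)[c [/not_attacks_b]].
  - by move=> /(dEb b bA)[c [/not_attacks_b]].
by move=> x ->; apply: defends_sub dEb => y; left.
Qed.

Lemma preferred_weakly_coherent (E : Arg S -> Prop) :
  preferred E -> weakly_coherent inc n A E.
Proof.
move=> prefE; split; first exact: prefE.1.
by move=> a aA _ _; exact: preferred_defended.
Qed.

Lemma InitCand_conflict_free (X : S -> Prop) :
  compatible X -> conflict_free (InitCand X).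
Proof.
move=> cX a b [_ [Xa _]] [_ [Xb undb]] [[s [bs inc_s]]|undb_a].
- exact: (cX _ _ (Xa _ (or_intror erefl)) (Xb _ bs) inc_s).
- exact: (undb _ undb_a (Xa _ (or_intror erefl))).
Qed.

Lemma Init_preferred (E : Arg S -> Prop) (X : S -> Prop) :
  preferred E -> compatible X -> incl E (InitCand X) -> forall a, Init X a <-> E a.
Proof.
move=> prefE cX EX a; split; last by move=> Ea; exists E; split=> //; exact: prefE.1.
move=> [F [[FA [_ dF]] [FX Fa]]].
apply: (preferred_maximal prefE FA _ _ Fa).
  move=> x y Hx Hy; apply: (InitCand_conflict_free cX);
    by [case: Hx => [/EX|/FX] | case: Hy => [/EX|/FX]].
by move=> x /dF; apply: defends_sub => y; right.
Qed.

Lemma Arg_w_preferred (E : Arg S -> Prop) (X : S -> Prop) :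
  preferred E -> compatible X -> incl E (InitCand X) -> forall a, Arg_w X a <-> E a.
Proof.
move=> prefE cX EX a; have InitE := Init_preferred prefE cX EX.
split; last by move=> Ea F InitF _; apply/InitF/InitE.
move=> /(_ E (fun b => (InitE b).1)); apply=> b; split.
  by move=> [[bA _] dEb]; exact: preferred_defended.
move=> Eb; have [bA [Xb undb]] := EX b Eb.
split; last exact: prefE.1.2.2.
by split=> //; split=> // s sb; apply: Xb; left.
Qed.

Lemma Sent_minarg (u s : S) : Sent (minarg u) s -> s = u.
Proof. by case=> [|->//]; rewrite inE => /eqP. Qed.

Lemma SentE_SentA (E : Arg S -> Prop) s : admissible E -> SentE E s -> SentA A s.
Proof. by move=> [EA _] [a [Ea sa]]; exists a => //; exact: EA. Qed.

Hypothesis inc_sym : forall s t, inc s t -> inc t s.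
Hypothesis n_min : forall t u, ~ und inc n (minarg t) u.
Hypothesis sat : saturated inc n A.

(* Minimal arguments cannot be undercut, so the counterattack must rebut u. *)
Lemma minarg_attack_countered (E : Arg S -> Prop) a u :
  admissible E -> E a -> minarg u \in A -> attacks (minarg u) a ->
  exists2 c, E c & inc u (Conc c).
Proof.
move=> [_ [_ dE]] Ea uA ua.
have [c [Ec [[s [/Sent_minarg -> inc_u]] | /n_min //]]] := dE a Ea _ uA ua.
by exists c.
Qed.

Lemma SentE_compatible (E : Arg S -> Prop) : admissible E -> compatible (SentE E).
Proof.
move=> admE; have rebut s t : SentE E s -> SentE E t -> inc t s -> minarg s \in A -> False.
  move=> [a [Ea sa]] [b [Eb tb]] ts sA.
  have sb : attacks (minarg s) b by left; exists t.
  have [c Ec inc_s] := minarg_attack_countered admE Eb sA sb.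
  by apply: admE.2.1 Ec Ea _; left; exists s.
move=> s t Es Et ts.
have [] := sat.1 s t (SentE_SentA admE Es) (SentE_SentA admE Et) (inc_sym ts).
  exact: rebut Es Et ts.
exact: rebut Et Es (inc_sym ts).
Qed.

Lemma admissible_InitCand (E : Arg S -> Prop) (X : S -> Prop) :
  admissible E -> compatible X -> (forall s, X s -> SentA A s) ->
  (forall s, SentE E s -> X s) -> incl E (InitCand X).
Proof.
move=> admE cX XA EX a Ea; split; first exact: admE.1.
split=> [s sa|u undu Xu]; first by apply: EX; exists a.
have uA := sat.2 u a (XA u Xu) (admE.1 a Ea) undu.
have [c Ec inc_u] := minarg_attack_countered admE Ea uA (or_intror undu).
by apply: (cX u (Conc c) Xu) (inc_sym inc_u); apply: EX; exists c; split=> //; right.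
Qed.

Lemma Arg_w_preferred_above (E : Arg S -> Prop) (X : S -> Prop) :
  preferred E -> compatible X -> (forall s, X s -> SentA A s) ->
  (forall s, SentE E s -> X s) -> forall a, Arg_w X a <-> E a.
Proof.
move=> prefE cX XA EX; apply: Arg_w_preferred => //.
exact: admissible_InitCand prefE.1 cX XA EX.
Qed.

Lemma weakly_adequate_SentE (E : Arg S -> Prop) :
  preferred E -> weakly_adequate (SentE E).
Proof.
move=> prefE; have cE := SentE_compatible prefE.1.
have SentE_A s : SentE E s -> SentA A s by exact: SentE_SentA prefE.1.
split=> //; split=> // a /(Arg_w_preferred_above prefE cE SentE_A (fun s => id)) Ea s sa.
by exists a.
Qed.

Definition sentences_of_A : seq S :=
  flatten [seq Conc a :: enum_fset (Prem a) | a <- enum_fset A].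

Lemma SentA_sentences_of_A s : SentA A s -> s \in sentences_of_A.
Proof.
move=> [a aA sa]; apply/flattenP; exists (Conc a :: enum_fset (Prem a)).
  exact: map_f.
by rewrite inE; case: sa => [->|->]; rewrite ?eqxx ?orbT.
Qed.

Lemma confident_above (Y : S -> Prop) :
  weakly_adequate Y -> exists2 Z, confident inc n A Z & forall s, Y s -> Z s.
Proof.
move=> waY; have [|Z [waZ maxZ YZ]] := exists_maximal_above (L := sentences_of_A) _ waY.
  by move=> W s [_ [WA _]] /WA; exact: SentA_sentences_of_A.
by exists Z.
Qed.

End PreferredExtensions.

Theorem mainTheorem17 (S : choiceType) (s0 : S)
  (inc : S -> S -> Prop) (n : Arg S -> option S) (A : {fset Arg S})
  (inc_sym : forall s t, inc s t -> inc t s)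
  (n_min : forall t u, ~ und inc n (minarg t) u)
  (prem_ne : forall a, a \in A -> Prem a != fset0)
  (sat : saturated inc n A) :
  forall E : Arg S -> Prop, preferred inc n A E -> confident_weakly_coherent inc n A E.
Proof.
move=> E prefE; split; first exact: preferred_weakly_coherent.
have [Z confZ EZ] := confident_above (weakly_adequate_SentE inc_sym n_min sat prefE).
have [[cZ [ZA _]] _] := confZ.
exists Z; split=> // a; symmetry.
exact: (Arg_w_preferred_above inc_sym n_min sat prefE cZ ZA EZ a).
Qed.
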